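(* Let $x\in\mathbb X$ with $\mathcal R(x)=\inf\{\mathcal R(z):z\in\mathbb X,\ Az=Ax\}$. Then $$\varrho_1(x)=\inf\{\|\omega\|_{\mathbb Y}:\omega\in\mathbb Y,\ A^*\omega\in\partial\mathcal R(x)\}\quad(\inf\emptyset=\infty).$$ Moreover, if this quantity is finite and $x_\alpha\in R_\alpha(Ax)$, $\alpha>0$, is any selection, then $\frac1\alpha(Ax-Ax_\alpha)$ converges weakly in $\mathbb Y$ as $\alpha\searrow0$ to the unique $\omega\in\mathbb Y$ with $A^*\omega\in\partial\mathcal R(x)$ and $\|\omega\|_{\mathbb Y}=\varrho_1(x)$.
   Context: Standing setting: $\mathbb X$ real Banach space, $\tau$ a topology with $(\mathbb X,\tau)$ locally convex Hausdorff; $\mathcal R:\mathbb X\to(-\infty,\infty]$ proper convex with $\tau$-compact sublevel sets; $\mathbb Y$ real Hilbert space; $A:\mathbb X\to\mathbb Y$ linear, $\tau$-to-weak continuous. $T_\alpha(x,g):=\frac1{2\alpha}\|g-Ax\|_{\mathbb Y}^2+\mathcal R(x)$, $R_\alpha(g):=\operatorname{argmin}_{x\in\mathrm{dom}(\mathcal R)}T_\alpha(x,g)$, $\varrho_1(x):=\sup\{\alpha^{-1}\|Ax-Ax_\alpha\|_{\mathbb Y}:\alpha>0,x_\alpha\in R_\alpha(Ax)\}$. The notation $A^*\omega\in\partial\mathcal R(x)$ means $\mathcal R(z)\ge\mathcal R(x)+\langle\omega,A(z-x)\rangle_{\mathbb Y}$ for all $z\in\mathbb X$. *)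

From HB Require Import structures.
From mathcomp Require Import all_boot all_order all_algebra.
From mathcomp Require Import all_classical all_reals all_analysis.
Set Implicit Arguments. Unset Strict Implicit. Unset Printing Implicit Defensive.
Import Order.TTheory GRing.Theory Num.Theory.
Import numFieldNormedType.Exports.
Local Open Scope classical_set_scope.
Local Open Scope ring_scope.

Definition banach_norm (R : realType) (X : lmodType R) (N : X -> R) : Prop :=
  [/\ (forall x, N x = 0 <-> x = 0),
      (forall (a : R) x, N (a *: x) = `|a| * N x),
      (forall x y, N (x + y) <= N x + N y) &
      (forall u : nat -> X,
         (forall e : R, 0 < e -> exists n0 : nat,
             forall m n, (n0 <= m)%N -> (n0 <= n)%N -> N (u m - u n) < e) ->
         exists l : X, forall e : R, 0 < e -> exists n0 : nat,
             forall n, (n0 <= n)%N -> N (u n - l) < e)].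

(** [ip] is an inner product on the complete normed space [Y] inducing its
    norm; together with completeness of [Y] this makes [Y] a real Hilbert space. *)
Definition hilbert_inner (R : realType) (Y : normedModType R)
  (ip : Y -> Y -> R) : Prop :=
  [/\ (forall x y, ip x y = ip y x),
      (forall (a : R) x y z, ip (a *: x + y) z = a * ip x z + ip y z) &
      (forall x, ip x x = `|x| ^+ 2)].

Definition proper_convex (R : realType) (X : lmodType R) (F : X -> \bar R) : Prop :=
  [/\ (forall x, F x != -oo%E),
      (exists x, (F x < +oo)%E) &
      (forall x y (t : R), 0 < t < 1 ->
         (F (t *: x + (1 - t) *: y)%R <= t%:E * F x + (1 - t)%:E * F y)%E)].

Definition dom (R : realType) (X : Type) (F : X -> \bar R) : set X :=
  [set x | (F x < +oo)%E].

Definition Tik (R : realType) (X : lmodType R) (Y : normedModType R)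
  (A : X -> Y) (Reg : X -> \bar R) (alpha : R) (x : X) (g : Y) : \bar R :=
  ((2 * alpha)^-1 * `|g - A x| ^+ 2)%:E + Reg x.

Definition Ralpha (R : realType) (X : lmodType R) (Y : normedModType R)
  (A : X -> Y) (Reg : X -> \bar R) (alpha : R) (g : Y) : set X :=
  [set x | dom Reg x /\
     forall z, dom Reg z -> (Tik A Reg alpha x g <= Tik A Reg alpha z g)%E].

Definition rho1 (R : realType) (X : lmodType R) (Y : normedModType R)
  (A : X -> Y) (Reg : X -> \bar R) (x : X) : \bar R :=
  ereal_sup [set r : \bar R | exists (alpha : R) (xa : X),
     [/\ 0 < alpha, Ralpha A Reg alpha (A x) xa &
          r = (alpha^-1 * `|A x - A xa|)%:E]].

(** A^* omega \in \partial Reg(x). *)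
Definition adj_subgrad (R : realType) (X : lmodType R) (Y : normedModType R)
  (ip : Y -> Y -> R) (A : X -> Y) (Reg : X -> \bar R) (x : X) (w : Y) : Prop :=
  forall z, (Reg z >= Reg x + (ip w (A (z - x)))%:E)%E.

From HB Require Import structures.
From mathcomp Require Import all_boot all_order all_algebra.
From mathcomp Require Import all_classical all_reals all_analysis.
From mathcomp Require Import ring lra.
Import Order.TTheory GRing.Theory Num.Theory.
Import numFieldNormedType.Exports.
Local Open Scope classical_set_scope.
Local Open Scope ring_scope.
Set Implicit Arguments. Unset Strict Implicit.

(* The proof rests on the optimality condition A^* omega_a \in \partial Reg(x_a)
   and on the monotonicity of the subdifferential, which together give
   - |omega_a| <= |w| for every dual certificate w at x, hence rho1 <= inf;
   - |omega_a|^2 increases as a decreases, with |omega_a - omega_b|^2 bounded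
     by |omega_b|^2 - |omega_a|^2; so if rho1 is finite, omega_a is Cauchy and
     converges to some w_lim with |w_lim| <= rho1.
   Compactness of the sublevel sets of Reg, weak continuity of A and the
   minimality of Reg x give Reg x <= liminf Reg (x_a), which lets the
   subgradient inequality at x_a pass to the limit: w_lim is a certificate,
   hence |w_lim| = rho1, and it is the only one of minimal norm. *)

Section InnerProduct.
Variables (R : realType) (Y : normedModType R) (ip : Y -> Y -> R).
Hypothesis hip : hilbert_inner ip.

Lemma ipC x y : ip x y = ip y x. Proof. by case: hip. Qed.

Lemma ip0l z : ip 0 z = 0.
Proof. case: hip => _ h _; have := h 1 0 0 z; rewrite scale1r addr0 mul1r; lra. Qed.

Lemma ipZl a x z : ip (a *: x) z = a * ip x z.
Proof. by case: hip => _ h _; have := h a x 0 z; rewrite addr0 ip0l addr0. Qed.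

Lemma ipDl x y z : ip (x + y) z = ip x z + ip y z.
Proof. by case: hip => _ h _; have := h 1 x y z; rewrite scale1r mul1r. Qed.

Lemma ipBl x y z : ip (x - y) z = ip x z - ip y z.
Proof. by rewrite ipDl -scaleN1r ipZl mulN1r. Qed.

Lemma ip0r z : ip z 0 = 0. Proof. by rewrite ipC ip0l. Qed.

Lemma ipZr a x z : ip z (a *: x) = a * ip z x.
Proof. by rewrite ipC ipZl ipC. Qed.

Lemma ipDr x y z : ip z (x + y) = ip z x + ip z y.
Proof. by rewrite ipC ipDl ipC (ipC y). Qed.

Lemma ipBr x y z : ip z (x - y) = ip z x - ip z y.
Proof. by rewrite ipC ipBl ipC (ipC y). Qed.

Lemma ipxx x : ip x x = `|x| ^+ 2. Proof. by case: hip. Qed.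

Lemma normB_sqr x y : `|x - y| ^+ 2 = `|x| ^+ 2 - 2 * ip x y + `|y| ^+ 2.
Proof. rewrite -!ipxx ipBl !ipBr (ipC y x); ring. Qed.

(** Cauchy–Schwarz inequality, proved from the expansion of
    [| |y| x - |x| y |^2 >= 0]. *)
Lemma ip_le x y : ip x y <= `|x| * `|y|.
Proof.
have [->|x0] := eqVneq x 0; first by rewrite ip0l normr0 mul0r.
have [->|y0] := eqVneq y 0; first by rewrite ip0r normr0 mulr0.
have := normB_sqr (`|y| *: x) (`|x| *: y).
rewrite ipZl ipZr !normrZ !normr_id => h.
have h0 : 0 <= `| `|y| *: x - `|x| *: y| ^+ 2 by rewrite exprn_ge0.
rewrite h in h0.
have px : 0 < `|x| by rewrite normr_gt0.
have py : 0 < `|y| by rewrite normr_gt0.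
have pxy : 0 < `|x| * `|y| by rewrite mulr_gt0.
nra.
Qed.

Lemma ip_abs_le x y : `|ip x y| <= `|x| * `|y|.
Proof.
have h1 := ip_le x y; have h2 := ip_le (- x) y.
rewrite -scaleN1r ipZl normrZ normrN1 mul1r in h2.
rewrite ler_norml; apply/andP; split; lra.
Qed.

Lemma monotone_pair_ineq (a1 a2 : R) (u v : Y) : 0 <= a2 -> a2 < a1 ->
  0 <= ip (u - v) (a2 *: v - a1 *: u) ->
  `|u| <= `|v| /\ `|u - v| ^+ 2 <= `|v| ^+ 2 - `|u| ^+ 2.
Proof.
move=> a20 a21 h.
rewrite ipBl !ipBr !ipZr !ipxx (ipC v u) in h.
have cs := ip_le u v.
set P := ip u v in h cs; set nu := `|u| in h cs *; set nv := `|v| in h cs *.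
have nu0 : 0 <= nu by rewrite normr_ge0.
have nv0 : 0 <= nv by rewrite normr_ge0.
have le_uv : nu <= nv.
  rewrite leNgt; apply/negP => lt_vu.
  have : (a1 + a2) * P <= (a1 + a2) * (nu * nv) by rewrite ler_pM2l //; lra.
  have f1 : 0 < a1 * nu - a2 * nv.
    have : a2 * nv <= a2 * nu by rewrite ler_wpM2l //; lra.
    have : a2 * nu < a1 * nu by rewrite ltr_pM2r //; lra.
    lra.
  have f2 : 0 < (a1 * nu - a2 * nv) * (nu - nv) by rewrite mulr_gt0 // subr_gt0.
  nra.
split => //.
have hP : nu ^+ 2 <= P.
  have : (a1 + a2) * nu ^+ 2 <= (a1 + a2) * P.
    have s1 : nu ^+ 2 <= nv ^+ 2 by rewrite lerXn2r // ?nnegrE.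
    have : a2 * nu ^+ 2 <= a2 * nv ^+ 2 by rewrite ler_wpM2l.
    lra.
  by rewrite ler_pM2l //; lra.
rewrite normB_sqr -/nu -/nv -/P; lra.
Qed.

Lemma cvg_ip_left (T : Type) (F : set_system T) {FF : Filter F}
  (f : T -> Y) (l v : Y) :
  f @ F --> l -> (fun t => ip (f t) v) @ F --> ip l v.
Proof.
move=> /cvgrPdist_lt fl; apply/cvgrPdist_lt => e e0.
have e1 : 0 < e / (`|v| + 1) by rewrite divr_gt0 // ltr_pwDr.
near=> t.
rewrite -ipBl; apply: le_lt_trans (ip_abs_le _ _) _.
have h1 : `|l - f t| < e / (`|v| + 1) by near: t; exact: fl.
have ht : `|l - f t| * (`|v| + 1) < e by rewrite -ltr_pdivlMr // ltr_pwDr.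
have : `|l - f t| * `|v| <= `|l - f t| * (`|v| + 1) by rewrite ler_wpM2l // lerDl.
lra.
Unshelve. all: by end_near.
Qed.

End InnerProduct.

(** If [c + t M >= 0] for all small [t > 0] (and [M >= 0]), then [c >= 0]:
    this is how first-order optimality conditions are read off. *)
Lemma ge0_of_perturbations (R : realFieldType) (c M : R) : 0 <= M ->
  (forall t, 0 < t < 1 -> 0 <= c + t * M) -> 0 <= c.
Proof.
move=> M0 h; rewrite leNgt; apply/negP => c0.
pose t := - c / (2 * (M - c)).
have Mc : 0 < M - c by lra.
have t0 : 0 < t by rewrite /t divr_gt0 // ?oppr_gt0 // mulr_gt0.
have ht : t * (2 * (M - c)) = - c by rewrite /t mulfVK // gt_eqF // mulr_gt0.
have t1 : t < 1 by nra.
have := h t; rewrite t0 t1 => /(_ isT); nra.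
Qed.

Lemma lee_of_upper_bounds (R : realType) (x y : \bar R) :
  (forall c : R, (y < c%:E)%E -> (x <= c%:E)%E) -> (x <= y)%E.
Proof.
case: y => [r| |] H.
- by apply/lee_addgt0Pr => e e0; rewrite -EFinD; apply: H; rewrite lte_fin ltrDl.
- exact: leey.
- case: x H => [s| |] H //.
  + by have := H (s - 1) (ltNyr _); rewrite lee_fin => h; exfalso; lra.
  + by have := H 0 (ltNyr _); rewrite leye_eq.
Qed.

Lemma dom_fin (R : realType) (T : Type) (F : T -> \bar R) z :
  (forall x, F x != -oo%E) -> dom F z -> exists r, F z = r%:E.
Proof. by move=> hN; rewrite /dom /=; move: (hN z); case: (F z) => [r| |] // _ _; exists r. Qed.

Lemma compact_cluster (T : topologicalType) (I : Type) (D : set I)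
  (B : I -> set T) (K : set T) (i0 : I) :
  compact K -> D i0 -> B i0 `<=` K ->
  (forall i j, D i -> D j -> exists2 k, D k & B k `<=` B i `&` B j) ->
  (forall i, D i -> B i !=set0) ->
  exists2 p, K p & forall i V, D i -> nbhs p V -> B i `&` V !=set0.
Proof.
move=> cK Di0 BK dir ne.
have FF : Filter (filter_from D B) by apply: filter_from_filter; first exists i0.
have PF : ProperFilter (filter_from D B) by exact: filter_from_proper.
have [p [Kp clp]] := cK _ PF (ex_intro2 _ _ i0 Di0 BK).
by exists p => // i V Di pV; apply: clp pV; exists i.
Qed.

Lemma lsc_attains_min (R : realType) (T : topologicalType) (f : T -> \bar R)
  (K : set T) (z0 : T) (c0 : R) :
  lower_semicontinuous f -> compact K -> (f z0 < c0%:E)%E ->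
  [set z | (f z <= c0%:E)%E] `<=` K -> exists p, forall z, (f p <= f z)%E.
Proof.
move=> lscf cK fz0 BK.
pose D := [set c : R | exists z, (f z < c%:E)%E].
pose B c := [set z | (f z <= c%:E)%E].
have dir c d : D c -> D d -> exists2 k, D k & B k `<=` B c `&` B d.
  move=> Dc Dd; have [cd|/ltW dc] := leP c d.
  - by exists c => // z Bz; split => //; apply: le_trans Bz _; rewrite lee_fin.
  - by exists d => // z Bz; split => //; apply: le_trans Bz _; rewrite lee_fin.
have ne c : D c -> B c !=set0 by move=> [z fz]; exists z; exact: ltW.
have [p _ clp] := compact_cluster (D := D) cK (ex_intro _ z0 fz0) BK dir ne.
exists p => z; apply: lee_of_upper_bounds => c fzc.
rewrite leNgt; apply/negP => /lscf [V pV Vf].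
have [y [By Vy]] := clp c V (ex_intro _ z fzc) pV.
by have := Vf y Vy; rewrite ltNge By.
Qed.

Lemma lsc_EFinD (R : realType) (T : topologicalType) (q : T -> R) (f : T -> \bar R) :
  (forall p e, 0 < e -> \forall z \near p, q p - e < q z) ->
  lower_semicontinuous f -> lower_semicontinuous (fun z => (q z)%:E + f z)%E.
Proof.
move=> lscq lscf p a /= ha.
have [b ab bf] : exists2 b, a - q p < b & (b%:E < f p)%E.
  move: ha; case: (f p) => [r| |] ha.
  - exists ((a - q p + r) / 2); rewrite -EFinD lte_fin in ha; rewrite ?lte_fin; lra.
  - by exists (a - q p + 1); [lra | exact: ltry].
  - by rewrite addeNy in ha.
have [V pV Vf] := lscf p b bf.
exists ([set z | q p - (b - (a - q p)) < q z] `&` V).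
  by apply: filterI => //; apply: lscq; lra.
move=> z [qz /Vf fz].
have -> : a%:E = ((q p - (b - (a - q p)))%:E + b%:E)%E by rewrite -EFinD; congr EFin; ring.
by apply: lteD; rewrite ?lte_fin.
Qed.

Lemma near_at_right0P (R : realType) (P : R -> Prop) :
  (\forall t \near 0^'+, P t) <-> exists2 d : R, 0 < d & forall t, 0 < t < d -> P t.
Proof.
split.
- move=> /nbhs_ballP [d /= d0 hd]; exists d => // t /andP[t0 td].
  by apply: hd => //=; rewrite /ball /= sub0r normrN gtr0_norm.
- move=> [d d0 hd]; apply/nbhs_ballP; exists d => // t /=.
  rewrite /ball /= sub0r normrN => h t0; apply: hd; rewrite t0 /=.
  by rewrite gtr0_norm in h.
Qed.

Section Optimality.
Variables (R : realType) (X : tvsType R) (Reg : X -> \bar R)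
  (Y : normedModType R) (ip : Y -> Y -> R) (A : {linear X -> Y}).
Hypothesis hip : hilbert_inner ip.
Hypothesis hReg : proper_convex Reg.

(** It is obtained by comparing [xa] with the convex combinations
    [t z + (1 - t) xa] and letting [t] tend to [0]. *)
Lemma Ralpha_subgrad (g : Y) a xa : 0 < a -> Ralpha A Reg a g xa ->
  adj_subgrad ip A Reg xa (a^-1 *: (g - A xa)).
Proof.
move=> a0 [dxa hmin] z; case: hReg => hN _ hC.
have [r0 E0] := dom_fin hN dxa.
case E1: (Reg z) => [r1| |]; [|by rewrite leey|by have := hN z; rewrite E1].
set d := g - A xa; set e := A z - A xa.
rewrite E0 [A (z - xa)]linearB /= -/e -EFinD lee_fin (ipZl hip).
set k := a^-1; have k0 : 0 < k by rewrite invr_gt0.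
rewrite -subr_ge0; apply: (@ge0_of_perturbations _ _ (k / 2 * `|e| ^+ 2)).
  by rewrite mulr_ge0 ?exprn_ge0 // divr_ge0 // ltW.
move=> t /andP[t0 t1].
set zt := t *: z + (1 - t) *: xa.
have hc : (Reg zt <= (t * r1 + (1 - t) * r0)%:E)%E.
  by have := hC z xa t; rewrite t0 t1 E0 E1 -!EFinM -EFinD; apply.
have [rt Et] : exists rt, Reg zt = rt%:E.
  by apply: (dom_fin hN); apply: le_lt_trans hc _; exact: ltry.
have dzt : dom Reg zt by rewrite /dom /= Et ltry.
have hm := hmin zt dzt.
rewrite /Tik E0 Et -!EFinD !lee_fin in hm; rewrite Et lee_fin in hc.
have hAzt : g - A zt = d - t *: e.
  rewrite /zt linearD !linearZ /= /d /e.
  rewrite scalerBl scale1r scalerN scalerBr opprD opprB opprB -!addrA; congr (_ + _).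
  by rewrite addrCA [in RHS]addrCA; congr (_ + _); exact: addrC.
rewrite hAzt (normB_sqr hip d (t *: e)) (ipZr hip) normrZ gtr0_norm // in hm.
have hk : (2 * a)^-1 = k / 2 by rewrite invfM mulrC.
rewrite exprMn hk -/d in hm.
have E20 : 0 <= `|e| ^+ 2 by rewrite exprn_ge0.
have h : 0 <= t * (r1 - (r0 + k * ip d e) + t * (k / 2 * `|e| ^+ 2)) by nra.
by rewrite pmulr_rge0 in h.
Qed.

Lemma subgrad_monotone p q w1 w2 rp rq : Reg p = rp%:E -> Reg q = rq%:E ->
  adj_subgrad ip A Reg p w1 -> adj_subgrad ip A Reg q w2 ->
  0 <= ip (w1 - w2) (A p - A q).
Proof.
move=> Ep Eq H1 H2; have := H1 q; have := H2 p.
rewrite Ep Eq -!EFinD !lee_fin !linearB /= => h2 h1.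
rewrite (ipBl hip) !(ipBr hip) in h1 h2 *; lra.
Qed.

Lemma subgrad_fin x w : adj_subgrad ip A Reg x w -> exists r, Reg x = r%:E.
Proof.
case: hReg => hN [z0 hz0] _ H; have := H z0.
move: (hN x); case: (Reg x) => [r| |] // _; first by exists r.
by rewrite addye // leye_eq => /eqP h; rewrite h in hz0.
Qed.

Lemma Ralpha_residual_le x w b xb : adj_subgrad ip A Reg x w -> 0 < b ->
  Ralpha A Reg b (A x) xb ->
  `|b^-1 *: (A x - A xb)| <= `|w| /\
  `|b^-1 *: (A x - A xb) - w| ^+ 2 <= `|w| ^+ 2 - `|b^-1 *: (A x - A xb)| ^+ 2.
Proof.
move=> Hw b0 hb; have [r Er] := subgrad_fin Hw.
have [rb Eb] : exists rb, Reg xb = rb%:E by case: hReg => hN _ _; exact: dom_fin hN hb.1.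
have := subgrad_monotone Eb Er (Ralpha_subgrad b0 hb) Hw.
have -> : A xb - A x = 0 *: w - b *: (b^-1 *: (A x - A xb)).
  by rewrite scale0r sub0r scalerA mulfV ?gt_eqF // scale1r opprB.
move=> h; exact: (monotone_pair_ineq hip (lexx 0) b0 h).
Qed.

End Optimality.

Section TikhonovExistence.
Variables (R : realType) (X : tvsType R) (Reg : X -> \bar R)
  (Y : normedModType R) (ip : Y -> Y -> R) (A : {linear X -> Y}).
Hypothesis hip : hilbert_inner ip.
Hypothesis hausX : hausdorff_space X.
Hypothesis hReg : proper_convex Reg.
Hypothesis hcpt : forall c : R, compact [set z : X | (Reg z <= c%:E)%E].
Hypothesis hAcont : forall v : Y, continuous (fun z : X => ip (A z) v).

(** The data-fidelity term [|g - A z|^2] is lower semicontinuous, because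
    [A] is continuous into the weak topology of [Y]. *)
Lemma sqr_residual_lsc g p e : 0 < e ->
  \forall z \near p, `|g - A p| ^+ 2 - e < `|g - A z| ^+ 2.
Proof.
move=> e0; set u := g - A p.
have e2 : 0 < e / 2 by rewrite divr_gt0.
have /cvgrPdist_lt /(_ _ e2) := @hAcont u p.
apply: filterS => z /=; rewrite ltr_norml => /andP[h1 h2].
have h := normB_sqr hip (g - A z) u.
have h0 : 0 <= `|g - A z - u| ^+ 2 by rewrite exprn_ge0.
rewrite h (ipBl hip) in h0.
have hu : `|u| ^+ 2 = ip g u - ip (A p) u by rewrite -(ipxx hip) /u (ipBl hip).
lra.
Qed.

(** Sublevel sets of [Reg] are compact, hence closed: [Reg] is lsc. *)
Lemma Reg_lsc : lower_semicontinuous Reg.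
Proof.
apply/lower_semicontinuousP => c.
have -> : [set z | (c%:E < Reg z)%E] = ~` [set z | (Reg z <= c%:E)%E].
  by apply/seteqP; split => z /=; rewrite ltNge => /negP.
by rewrite openC; exact: compact_closed hausX (@hcpt c).
Qed.

Variables (g : Y) (a : R).
Hypothesis a0 : 0 < a.

Lemma Tik_lsc : lower_semicontinuous (fun z => Tik A Reg a z g).
Proof.
apply: (lsc_EFinD (q := fun z => (2 * a)^-1 * `|g - A z| ^+ 2)) Reg_lsc => p e e0.
have e2a : 0 < e * (2 * a) by rewrite !mulr_gt0.
have -> : e = (2 * a)^-1 * (e * (2 * a)) by field; exact: lt0r_neq0.
apply: filterS (sqr_residual_lsc g p e2a) => z hz.
by rewrite -mulrBr ltr_pM2l // invr_gt0 mulr_gt0.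
Qed.

Lemma Reg_le_Tik z : (Reg z <= Tik A Reg a z g)%E.
Proof.
by rewrite /Tik leeDr // lee_fin mulr_ge0 ?exprn_ge0 // invr_ge0 mulr_ge0 // ltW.
Qed.

(** Existence of Tikhonov minimisers: [T_a(., g)] is lsc and its sublevel
    sets lie in the compact sublevel sets of [Reg]. *)
Lemma Ralpha_nonempty : exists z, Ralpha A Reg a g z.
Proof.
case: hReg => hN [z0 dz0] _.
have [r0 E0] := dom_fin hN dz0.
set t0 := (2 * a)^-1 * `|g - A z0| ^+ 2 + r0.
have Tz0 : Tik A Reg a z0 g = t0%:E by rewrite /Tik E0 -EFinD.
have Tz0_lt : (Tik A Reg a z0 g < (t0 + 1)%:E)%E by rewrite Tz0 lte_fin ltrDl.
have [p minp] := lsc_attains_min Tik_lsc (@hcpt (t0 + 1)) Tz0_lt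
  (fun z hz => le_trans (Reg_le_Tik z) hz).
have dp : dom Reg p.
  by apply: le_lt_trans (Reg_le_Tik p) _; apply: le_lt_trans (minp z0) _; rewrite Tz0 ltry.
by exists p; split => // z _; exact: minp.
Qed.

End TikhonovExistence.

Section Selection.
Variables (R : realType) (X : tvsType R) (Reg : X -> \bar R)
  (Y : completeNormedModType R) (ip : Y -> Y -> R) (A : {linear X -> Y})
  (x : X) (xa : R -> X).
Hypothesis hip : hilbert_inner ip.
Hypothesis hReg : proper_convex Reg.
Hypothesis hxa : forall a, 0 < a -> Ralpha A Reg a (A x) (xa a).

Definition omega (a : R) : Y := a^-1 *: (A x - A (xa a)).

Lemma A_xa a : 0 < a -> A (xa a) = A x - a *: omega a.
Proof.
by move=> a0; rewrite /omega scalerA mulfV ?gt_eqF // scale1r opprB addrC subrK.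
Qed.

Lemma Reg_xa_fin a : 0 < a -> exists r, Reg (xa a) = r%:E.
Proof. by move=> a0; case: hReg => hN _ _; exact: dom_fin hN (hxa a0).1. Qed.

Lemma omega_subgrad a : 0 < a -> adj_subgrad ip A Reg (xa a) (omega a).
Proof. by move=> a0; exact: (Ralpha_subgrad hip hReg a0 (hxa a0)). Qed.

(** The subgradient inequality at [xa a], weakened so as to be centred at [x]. *)
Lemma omega_subgrad_shift a z : 0 < a ->
  (Reg (xa a) + (ip (omega a) (A z - A x))%:E <= Reg z)%E.
Proof.
move=> a0; apply: le_trans (omega_subgrad a0 z); apply: leeD; first exact: lexx.
have -> : A (z - xa a) = (A z - A x) + a *: omega a.
  by rewrite linearB /= (A_xa a0) opprB addrCA addrC.
by rewrite lee_fin [X in _ <= X](ipDr hip) (ipZr hip) (ipxx hip) lerDl mulr_ge0 ?exprn_ge0 // ltW.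
Qed.

Lemma omega_monotone a b : 0 < b -> b < a ->
  `|omega a| <= `|omega b| /\
  `|omega a - omega b| ^+ 2 <= `|omega b| ^+ 2 - `|omega a| ^+ 2.
Proof.
move=> b0 ba; have a0 := lt_trans b0 ba.
have [ra Ea] := Reg_xa_fin a0; have [rb Eb] := Reg_xa_fin b0.
have := subgrad_monotone hip Ea Eb (omega_subgrad a0) (omega_subgrad b0).
have -> : A (xa a) - A (xa b) = b *: omega b - a *: omega a.
  by rewrite (A_xa a0) (A_xa b0) opprB addrC addrA subrK.
by move=> h; exact: (monotone_pair_ineq hip (ltW b0) ba h).
Qed.

Variable rho : R.
Hypothesis hrho : forall a, 0 < a -> `|omega a| <= rho.

Lemma rho_ge0 : 0 <= rho.
Proof. exact: le_trans (normr_ge0 _) (hrho ltr01). Qed.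

Lemma omega_ip_le a v : 0 < a -> `|ip (omega a) v| <= rho * `|v|.
Proof. by move=> a0; apply: le_trans (ip_abs_le hip _ _) _; rewrite ler_wpM2r // hrho. Qed.

(** [omega] is Cauchy at [0+]: [|omega a|^2] increases (as [a] decreases) to
    its finite supremum [s], and [omega_monotone] bounds [|omega a - omega b|^2]
    by [s - |omega a0|^2] for [a, b < a0]. *)
Lemma omega_cauchy e : 0 < e -> exists2 d, 0 < d &
  forall a b, 0 < a < d -> 0 < b < d -> `|omega a - omega b| < e.
Proof.
move=> e0.
have hsup : has_sup [set `|omega a| ^+ 2 | a in [set a : R | 0 < a]].
  split; first by exists (`|omega 1| ^+ 2), 1 => //=; rewrite ltr01.
  exists (rho ^+ 2) => _ [a /= a0 <-].
  by rewrite lerXn2r // ?nnegrE ?hrho // (le_trans _ (hrho a0)).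
have [_ [a0 /= a00 <-] ha0] := sup_adherent (mulr_gt0 e0 e0) hsup.
set s := sup _ in ha0.
have ub a : 0 < a -> `|omega a| ^+ 2 <= s.
  by move=> ap; apply: (sup_upper_bound hsup); exists a.
have key a b : 0 < b -> b < a -> a < a0 -> `|omega a - omega b| < e.
  move=> b0 ba aa0.
  have [_ h1] := omega_monotone b0 ba.
  have [h2 _] := omega_monotone (lt_trans b0 ba) aa0.
  have h3 := ub _ b0.
  have h4 : `|omega a0| ^+ 2 <= `|omega a| ^+ 2 by rewrite lerXn2r // ?nnegrE.
  have h5 : `|omega a - omega b| ^+ 2 < e * e by lra.
  rewrite ltNge; apply/negP => h6.
  have : e * e <= `|omega a - omega b| ^+ 2 by rewrite expr2 ler_pM // ltW.
  lra.
exists a0 => // a b /andP[a0p aa0] /andP[b0p ba0].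
case: (ltgtP a b) => [ab|ba|->].
- by rewrite distrC; apply: key.
- exact: key.
- by rewrite subrr normr0.
Qed.

Lemma omega_cvg : cvg (omega @ 0^'+).
Proof.
apply: cauchy_cvg; apply: cauchy_exP => e e0.
have [d d0 hd] := omega_cauchy e0.
exists (omega (d / 2)); apply/near_at_right0P; exists d => // t /andP[t0 td].
have d2 : 0 < d / 2 < d.
  by rewrite divr_gt0 //= ltr_pdivrMr // ltr_pMr // ltr1n.
by have := hd _ t d2; rewrite t0 td => /(_ isT); rewrite -ball_normE.
Qed.

Definition w_lim : Y := lim (omega @ 0^'+).

Lemma omega_to_w : omega @ 0^'+ --> w_lim.
Proof. exact: omega_cvg. Qed.

Lemma w_lim_norm_le : `|w_lim| <= rho.
Proof.
apply: cvgr_to_le (cvg_norm omega_to_w) _; near=> a; apply: hrho.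
by near: a; exact: nbhs_right_gt.
Unshelve. all: by end_near.
Qed.

Lemma residual_weak_cvg v :
  (fun a => ip (a^-1 *: (A x - A (xa a))) v) @ 0^'+ --> ip w_lim v.
Proof. exact: (cvg_ip_left hip omega_to_w). Qed.

(** [w_lim] is the unique dual certificate of norm at most [|w_lim|]: for any
    certificate [w'], [|omega a - w'|^2 + |omega a|^2 <= |w'|^2], and in the
    limit [|w_lim - w'|^2 <= |w'|^2 - |w_lim|^2 <= 0]. *)
Lemma w_lim_unique w' : adj_subgrad ip A Reg x w' -> `|w'| <= `|w_lim| -> w' = w_lim.
Proof.
move=> sw' nw'; have omw := omega_to_w.
have cv : (fun a => `|omega a - w'| ^+ 2 + `|omega a| ^+ 2) @ 0^'+ -->
    `|w_lim - w'| ^+ 2 + `|w_lim| ^+ 2.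
  apply: cvgD; rewrite expr2; under eq_fun do rewrite expr2.
  - by apply: cvgM; apply: cvg_norm; apply: cvgB => //; exact: cvg_cst.
  - by apply: cvgM; apply: cvg_norm.
have le_w : `|w_lim - w'| ^+ 2 + `|w_lim| ^+ 2 <= `|w'| ^+ 2.
  apply: (cvgr_to_le cv); near=> a.
  have a0 : 0 < a by near: a; exact: nbhs_right_gt.
  by have [_] := Ralpha_residual_le hip hReg sw' a0 (hxa a0); rewrite /omega; lra.
have : `|w'| ^+ 2 <= `|w_lim| ^+ 2 by rewrite lerXn2r // nnegrE.
move=> h1; have h : `|w_lim - w'| ^+ 2 <= 0 by lra.
by apply/eqP; rewrite eq_sym -subr_eq0 -normr_eq0 -sqrf_eq0 eq_le h exprn_ge0.
Unshelve. all: by end_near.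
Qed.

Hypothesis hcpt : forall c : R, compact [set z : X | (Reg z <= c%:E)%E].
Hypothesis hAcont : forall v : Y, continuous (fun z : X => ip (A z) v).
Hypothesis hx : Reg x = ereal_inf [set Reg z | z in [set z : X | A z = A x]].

(** [A (xa a) = A x - a omega a] tends weakly to [A x]; hence every point [p]
    adherent to the net [xa] at [0+] satisfies [A p = A x]. *)
Lemma cluster_A_eq p :
  (forall d (V : set X), 0 < d -> nbhs p V -> exists a, 0 < a < d /\ V (xa a)) ->
  A p = A x.
Proof.
move=> clp; set u := A p - A x.
suff u0 : `|u| ^+ 2 <= 0.
  by apply/eqP; rewrite -subr_eq0 -/u -normr_eq0 -sqrf_eq0 eq_le u0 exprn_ge0.
apply/ler_addgt0Pr => eta eta0; rewrite add0r.
have eta2 : 0 < eta / 2 by rewrite divr_gt0.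
have /cvgrPdist_lt /(_ _ eta2) pV := @hAcont u p.
have K0 : 0 < rho * `|u| + 1 by rewrite ltr_pwDr // mulr_ge0 // rho_ge0.
have [a [/andP[a0 ad] /= Va]] := clp _ _ (divr_gt0 eta2 K0) pV.
rewrite ltr_pdivlMr // mulrDr mulr1 in ad.
rewrite (A_xa a0) (ipBl hip) (ipZl hip) ltr_norml in Va; case/andP: Va => h1 h2.
have : `|a * ip (omega a) u| <= a * (rho * `|u|).
  by rewrite normrM gtr0_norm // ler_wpM2l ?omega_ip_le // ltW.
rewrite ler_norml => /andP[h3 h4].
have hu : `|u| ^+ 2 = ip (A p) u - ip (A x) u by rewrite -(ipxx hip) (ipBl hip).
lra.
Qed.

(** [Reg x <= liminf_{a -> 0+} Reg (xa a)]: a cluster point [p] of the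
    [xa a] with [Reg (xa a) <= c] exists by compactness, satisfies [A p = A x]
    and [Reg p <= c]; conclude by the minimality of [Reg x] on [A^{-1}(A x)]. *)
Lemma Reg_le_of_frequently c :
  (forall d, 0 < d -> exists a, 0 < a < d /\ (Reg (xa a) <= c%:E)%E) ->
  (Reg x <= c%:E)%E.
Proof.
move=> freq.
pose B d := [set xa a | a in [set a | 0 < a < d /\ (Reg (xa a) <= c%:E)%E]].
have dir d1 d2 : 0 < d1 -> 0 < d2 -> exists2 d, 0 < d & B d `<=` B d1 `&` B d2.
  move=> d10 d20; exists (Order.min d1 d2); first by rewrite lt_min d10 d20.
  move=> _ [a [/andP[a0 ad] ca] <-]; rewrite lt_min in ad; case/andP: ad => ad1 ad2.
  by split; exists a; rewrite //= a0 ?ad1 ?ad2.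
have neB d : 0 < d -> B d !=set0.
  by move=> d0; have [a ha] := freq d d0; exists (xa a), a.
have BK : B 1 `<=` [set z | (Reg z <= c%:E)%E] by move=> _ [a [_ ca] <-].
have [p Kp clp] := compact_cluster (D := [set d : R | 0 < d]) (@hcpt c) ltr01 BK dir neB.
have Ap : A p = A x.
  apply: cluster_A_eq => d V d0 pV.
  by have [_ [[a [ad _] <-] Va]] := clp d V d0 pV; exists a.
by rewrite hx; apply: le_trans Kp; apply: ereal_inf_lbound; exists p.
Qed.

(** [Reg x] is finite: [Reg (xa a)] is bounded above, by [omega_subgrad_shift]
    tested at a point of the domain. *)
Lemma Reg_x_fin : exists r, Reg x = r%:E.
Proof.
case: hReg => hN [z0 dz0] _; have [r0 E0] := dom_fin hN dz0.
suff Hx : (Reg x <= (r0 + rho * `|A z0 - A x|)%:E)%E.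
  by apply: dom_fin hN _; apply: le_lt_trans Hx (ltry _).
apply: Reg_le_of_frequently => d d0; exists (d / 2).
have d2 : 0 < d / 2 by rewrite divr_gt0.
split; first by rewrite d2 ltr_pdivrMr // ltr_pMr // ltr1n.
have [ra Ea] := Reg_xa_fin d2.
have := omega_subgrad_shift z0 d2; rewrite Ea E0 -EFinD !lee_fin.
by have := omega_ip_le (A z0 - A x) d2; rewrite ler_norml => /andP[h _]; lra.
Qed.

Lemma Reg_xa_liminf r e : Reg x = r%:E -> 0 < e ->
  \forall a \near 0^'+, ((r - e)%:E < Reg (xa a))%E.
Proof.
move=> Er e0; apply/near_at_right0P; apply: contrapT => H.
suff : (Reg x <= (r - e)%:E)%E by rewrite Er lee_fin; lra.
apply: Reg_le_of_frequently => d d0; apply: contrapT => H2; apply: H.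
exists d => // a ha; rewrite ltNge; apply/negP => h; apply: H2.
by exists a.
Qed.

(** [A^* w_lim \in \partial Reg(x)]: pass to the limit in
    [omega_subgrad_shift], using the liminf inequality for [Reg (xa a)]. *)
Lemma w_lim_subgrad : adj_subgrad ip A Reg x w_lim.
Proof.
move=> z; have [r Er] := Reg_x_fin; case: hReg => hN _ _.
case Ez: (Reg z) => [rz| |]; [|by rewrite leey|by have := hN z; rewrite Ez].
rewrite Er -EFinD lee_fin [A (z - x)]linearB /=.
apply/ler_addgt0Pr => e e0; have e2 : 0 < e / 2 by rewrite divr_gt0.
have wk : (fun a => ip (omega a) (A z - A x)) @ 0^'+ --> ip w_lim (A z - A x).
  exact: (cvg_ip_left hip omega_to_w).
move/cvgrPdist_lt: wk => /(_ _ e2) wk.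
near (0 : R)^'+ => a.
have a0 : 0 < a by near: a; exact: nbhs_right_gt.
have ha : ((r - e / 2)%:E < Reg (xa a))%E by near: a; exact: Reg_xa_liminf.
have hw : `|ip w_lim (A z - A x) - ip (omega a) (A z - A x)| < e / 2.
  by near: a; exact: wk.
have [ra Ea] := Reg_xa_fin a0.
have := omega_subgrad_shift z a0; rewrite Ea Ez -EFinD lee_fin.
by rewrite Ea lte_fin in ha; move: hw; rewrite ltr_norml => /andP[h1 h2]; lra.
Unshelve. all: by end_near.
Qed.

End Selection.

Section Rho1.
Variables (R : realType) (X : tvsType R) (Reg : X -> \bar R)
  (Y : completeNormedModType R) (ip : Y -> Y -> R) (A : {linear X -> Y}) (x : X).
Hypothesis hip : hilbert_inner ip.
Hypothesis hausX : hausdorff_space X.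
Hypothesis hReg : proper_convex Reg.
Hypothesis hcpt : forall c : R, compact [set z : X | (Reg z <= c%:E)%E].
Hypothesis hAcont : forall v : Y, continuous (fun z : X => ip (A z) v).
Hypothesis hx : Reg x = ereal_inf [set Reg z | z in [set z : X | A z = A x]].

Lemma rho1_ub b xb : 0 < b -> Ralpha A Reg b (A x) xb ->
  ((b^-1 * `|A x - A xb|)%:E <= rho1 A Reg x)%E.
Proof. by move=> b0 hb; apply: ereal_sup_ubound; exists b, xb. Qed.

Lemma rho1_le_subgrad w : adj_subgrad ip A Reg x w -> (rho1 A Reg x <= (`|w|)%:E)%E.
Proof.
move=> Hw; apply/ereal_supP => _ [b [xb [b0 hb ->]]].
have [h _] := Ralpha_residual_le hip hReg Hw b0 hb.
have bi : 0 < b^-1 by rewrite invr_gt0.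
by rewrite lee_fin -(gtr0_norm bi) -normrZ.
Qed.

Lemma selection_exists :
  exists xs : R -> X, forall a, 0 < a -> Ralpha A Reg a (A x) (xs a).
Proof.
have : forall a : R, exists z, 0 < a -> Ralpha A Reg a (A x) z.
  move=> a; have [a0|_] := ltP 0 a; last by exists x.
  by have [z hz] := Ralpha_nonempty hip hausX hReg hcpt hAcont (A x) a0; exists z.
by move/choice => [xs hxs]; exists xs.
Qed.

Section FiniteRho1.
Variables (r : R) (xs : R -> X).
Hypothesis Er : rho1 A Reg x = r%:E.
Hypothesis hxs : forall a, 0 < a -> Ralpha A Reg a (A x) (xs a).

Lemma rho1_selection_bound a : 0 < a -> `|omega A x xs a| <= r.
Proof.
move=> a0; rewrite -lee_fin -Er /omega normrZ gtr0_norm ?invr_gt0 //.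
exact: rho1_ub (hxs a0).
Qed.

Lemma w_lim_rho1 :
  adj_subgrad ip A Reg x (w_lim A x xs) /\ `|w_lim A x xs| = r.
Proof.
have sw := w_lim_subgrad hip hReg hxs rho1_selection_bound hcpt hAcont hx.
split => //; apply/eqP; rewrite eq_le (w_lim_norm_le hip hReg hxs rho1_selection_bound).
by rewrite -lee_fin -Er rho1_le_subgrad.
Qed.

End FiniteRho1.
End Rho1.

Theorem proposition4p1 (R : realType)
  (X : tvsType R) (hausX : hausdorff_space X)
  (nX : X -> R) (hnX : banach_norm nX)
  (Reg : X -> \bar R) (hReg : proper_convex Reg)
  (hcpt : forall c : R, compact [set x : X | (Reg x <= c%:E)%E])
  (Y : completeNormedModType R) (ip : Y -> Y -> R) (hip : hilbert_inner ip)
  (A : {linear X -> Y})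
  (hAcont : forall v : Y, continuous (fun x : X => ip (A x) v))
  (x : X)
  (hx : Reg x = ereal_inf [set Reg z | z in [set z : X | A z = A x]]) :
  rho1 A Reg x = ereal_inf [set (`|w|)%:E | w in [set w : Y | adj_subgrad ip A Reg x w]]
  /\ (rho1 A Reg x \is a fin_num ->
      forall xa : R -> X, (forall alpha : R, 0 < alpha -> Ralpha A Reg alpha (A x) (xa alpha)) ->
      exists w : Y,
        [/\ adj_subgrad ip A Reg x w, (`|w|)%:E = rho1 A Reg x,
            (forall w' : Y, adj_subgrad ip A Reg x w' -> (`|w'|)%:E = rho1 A Reg x -> w' = w) &
            (forall v : Y,
               (fun alpha : R => ip (alpha^-1 *: (A x - A (xa alpha))) v) @ 0^'+ --> ip w v)]).
Proof.
split.
  apply/eqP; rewrite eq_le; apply/andP; split.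
    by apply/ereal_infP => _ [w hw <-]; exact: (rho1_le_subgrad hip hReg hw).
  have [xs hxs] := selection_exists x hip hausX hReg hcpt hAcont.
  case Er: (rho1 A Reg x) => [r| |]; [|exact: leey|].
  - have [sw nw] := w_lim_rho1 hip hReg hcpt hAcont hx Er hxs.
    by apply: ereal_inf_lbound; exists (w_lim A x xs); rewrite // nw.
  - by have := rho1_ub ltr01 (hxs 1 ltr01); rewrite Er leeNy_eq.
move=> fin xa hxa; have Er : rho1 A Reg x = (fine (rho1 A Reg x))%:E by rewrite fineK.
have hb := rho1_selection_bound Er hxa.
have [sw nw] := w_lim_rho1 hip hReg hcpt hAcont hx Er hxa.
exists (w_lim A x xa); split => //.
- by rewrite nw -Er.
- move=> w' sw' nw'; apply: (w_lim_unique hip hReg hxa hb sw').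
  by rewrite nw -lee_fin -Er nw'.
- by move=> v; exact: (residual_weak_cvg hip hReg hxa hb).
Qed.
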